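(* The class of weakly separable extensions is Morita invariant: if $A/B$ is weakly separable and $A/B$ is Morita equivalent to $A'/B'$, then $A'/B'$ is weakly separable.
   Context: All rings have identity, subrings contain the identity, modules are unital; a ring extension $A/B$ means $B$ is a subring of $A$. A $B$-derivation of $A$ to $A$ is an additive map $D:A\to A$ with $D(xy)=D(x)y+xD(y)$ for all $x,y\in A$ and $D(b)=0$ for all $b\in B$; it is inner if there is $s\in A$ with $D(x)=sx-xs$ for all $x\in A$. $A/B$ is weakly separable if every $B$-derivation of $A$ to $A$ is inner. For bimodules ${}_AX_{A'}$, ${}_AY_{A'}$, write $X\mid Y$ if $X$ is isomorphic to a direct summand of a finite direct sum of copies of $Y$, and $X\sim Y$ if $X\mid Y$ and $Y\mid X$. $\mathrm{End}^r({}_AM)$ denotes the ring of left $A$-endomorphisms of $M$ acting on the right. A bimodule ${}_AM_{A'}$ is a Morita module if ${}_AM\sim{}_AA$ and $\mathrm{End}^r({}_AM)=A'$. Ring extensions $A/B$ and $A'/B'$ are Morita equivalent if there exist Morita modules ${}_AM_{A'}$ and ${}_BN_{B'}$ with ${}_AA\otimes_BN_{B'}\cong{}_AM_{B'}$. A class $\mathscr C$ is Morita invariant if whenever $A/B\in\mathscr C$ and $A/B$ is Morita equivalent to $A'/B'$, then $A'/B'\in\mathscr C$. *)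

From HB Require Import structures.
From mathcomp Require Import all_boot all_algebra.
Set Implicit Arguments. Unset Strict Implicit. Unset Printing Implicit Defensive.
Import GRing.Theory.
Local Open Scope ring_scope.

(* A ring extension A/B is encoded by an injective unital ring morphism
   iota : B -> A (B is identified with its image, a subring of A). *)

Definition is_derivation (B A : pzRingType) (iota : B -> A) (D : A -> A) : Prop :=
  [/\ forall x y, D (x + y) = D x + D y,
      forall x y, D (x * y) = D x * y + x * D y
    & forall b, D (iota b) = 0].

Definition is_inner (A : pzRingType) (D : A -> A) : Prop :=
  exists s : A, forall x, D x = s * x - x * s.

Definition weakly_separable (B A : pzRingType) (iota : B -> A) : Prop :=
  forall D : A -> A, is_derivation iota D -> is_inner D.

Definition lmod_ax (R : pzRingType) (X : zmodType) (act : R -> X -> X) : Prop :=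
  [/\ forall x, act 1 x = x,
      forall r s x, act (r * s) x = act r (act s x),
      forall r x y, act r (x + y) = act r x + act r y
    & forall r s x, act (r + s) x = act r x + act s x].

Definition rmod_ax (R : pzRingType) (X : zmodType) (act : X -> R -> X) : Prop :=
  [/\ forall x, act x 1 = x,
      forall r s x, act x (r * s) = act (act x r) s,
      forall r x y, act (x + y) r = act x r + act y r
    & forall r s x, act x (r + s) = act x r + act x s].

Definition bimod_ax (R S : pzRingType) (X : zmodType)
    (la : R -> X -> X) (ra : X -> S -> X) : Prop :=
  [/\ lmod_ax la, rmod_ax ra
    & forall r s x, la r (ra x s) = ra (la r x) s].

(* X | Y as left R-modules: X is isomorphic to a direct summand of a finite
   direct sum Y^n, i.e. there are left R-linear maps f : X -> Y^n and
   g : Y^n -> X with g \o f = id (Y^n with the componentwise structure). *)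
Definition ldivides (R : pzRingType) (X Y : zmodType)
    (actX : R -> X -> X) (actY : R -> Y -> Y) : Prop :=
  exists (n : nat) (f : X -> 'I_n -> Y) (g : ('I_n -> Y) -> X),
    [/\ forall x x' i, f (x + x') i = f x i + f x' i,
        forall r x i, f (actX r x) i = actY r (f x i),
        forall u v, g (fun i => u i + v i) = g u + g v,
        forall r u, g (fun i => actY r (u i)) = actX r (g u)
      & forall x, g (f x) = x].

Definition lreg (R : pzRingType) : R -> R -> R := fun r x => r * x.

(* Morita module _R M_{R'}: a bimodule with _R M ~ _R R and
   End^r(_R M) = R', i.e. the canonical map R' -> End^r(_R M),
   r' |-> (m |-> m r'), is bijective. *)
Definition morita_module (R R' : pzRingType) (M : zmodType)
    (la : R -> M -> M) (ra : M -> R' -> M) : Prop :=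
  [/\ bimod_ax la ra,
      ldivides la (@lreg R) /\ ldivides (@lreg R) la,
      (forall r1 r2 : R', (forall m, ra m r1 = ra m r2) -> r1 = r2)
    & (forall h : M -> M,
         (forall m m', h (m + m') = h m + h m') ->
         (forall r m, h (la r m) = la r (h m)) ->
         exists r' : R', forall m, h m = ra m r')].

Definition balanced (B A : pzRingType) (iota : B -> A) (N P : zmodType)
    (lbN : B -> N -> N) (psi : A -> N -> P) : Prop :=
  [/\ forall a1 a2 n, psi (a1 + a2) n = psi a1 n + psi a2 n,
      forall a n1 n2, psi a (n1 + n2) = psi a n1 + psi a n2
    & forall b a n, psi (a * iota b) n = psi a (lbN b n)].

(* _A A (x)_B N_{B'} ~= _A M_{B'} as A-B'-bimodules (M a right B'-module by
   restriction along iota').  Stated via the defining universal property of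
   the tensor product: phi : A x N -> M is B-balanced, compatible with the
   left A-action and the right B'-action, and universal among B-balanced
   biadditive maps into abelian groups (unique additive factorization). *)
Definition tensor_iso (B A B' A' : pzRingType) (iota : B -> A) (iota' : B' -> A')
    (M N : zmodType) (laM : A -> M -> M) (raM : M -> A' -> M)
    (lbN : B -> N -> N) (rbN : N -> B' -> N) : Prop :=
  exists phi : A -> N -> M,
    [/\ balanced iota lbN phi,
        forall a1 a n, phi (a1 * a) n = laM a1 (phi a n),
        forall b' a n, phi a (rbN n b') = raM (phi a n) (iota' b')
      & forall (P : zmodType) (psi : A -> N -> P), balanced iota lbN psi ->
          exists h : M -> P,
            [/\ forall m m', h (m + m') = h m + h m',
                forall a n, h (phi a n) = psi a n
              & forall h' : M -> P, (forall m m', h' (m + m') = h' m + h' m') ->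
                  (forall a n, h' (phi a n) = psi a n) -> forall m, h' m = h m]].

Definition morita_equivalent (B A B' A' : pzRingType)
    (iota : B -> A) (iota' : B' -> A') : Prop :=
  exists (M : zmodType) (laM : A -> M -> M) (raM : M -> A' -> M)
         (N : zmodType) (lbN : B -> N -> N) (rbN : N -> B' -> N),
    [/\ morita_module laM raM,
        morita_module lbN rbN
      & tensor_iso iota iota' laM raM lbN rbN].

From mathcomp Require Import all_boot all_algebra.
From Stdlib Require Import FunctionalExtensionality IndefiniteDescription.
Set Implicit Arguments. Unset Strict Implicit. Unset Printing Implicit Defensive.
Import GRing.Theory.
Local Open Scope ring_scope.

(* Let D' be a B'-derivation of A'.  A trace-one family (e_i, g_i) of the
   generator _B N gives M_{A'} the dual basis (1 (x) e_i, c_i), and the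
   Grassmann connection  delta m = sum_i (1 (x) e_i) D'(c_i m)  satisfies
   delta (m a') = (delta m) a' + m D'(a').  It commutes with B, because B acts
   on this dual basis through matrices with entries in B'.  For a in A the
   commutator [a, delta] is right A'-linear, hence (M being a generator over A)
   left multiplication by some d(a) in A; d is a B-derivation of A, so
   d = [s, -] for some s.  Then delta + s is left A-linear, i.e. right
   multiplication by some t in A', and D' = [-t, -]. *)

Section AdditiveMaps.

Variables (U V : zmodType) (f : U -> V).
Hypothesis fD : {morph f : x y / x + y}.

Lemma morph_add0 : f 0 = 0.
Proof. by apply: (addrI (f 0)); rewrite -fD !addr0. Qed.

Lemma morph_oppr x : f (- x) = - f x.
Proof. by apply: (addrI (f x)); rewrite -fD !subrr morph_add0. Qed.

Lemma morph_subr x y : f (x - y) = f x - f y.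
Proof. by rewrite fD morph_oppr. Qed.

Lemma morph_sum (I : Type) (r : seq I) (P : pred I) (F : I -> U) :
  f (\sum_(i <- r | P i) F i) = \sum_(i <- r | P i) f (F i).
Proof. exact: big_morph fD morph_add0 _ _ _ _. Qed.

End AdditiveMaps.

Lemma ldivides_lreg_trace1 (R : pzRingType) (X : zmodType) (act : R -> X -> X) :
  lmod_ax act -> ldivides (@lreg R) act ->
  exists n (e : 'I_n -> X) (g : 'I_n -> X -> R),
    [/\ forall i, {morph g i : x y / x + y},
        forall i r x, g i (act r x) = r * g i x
      & \sum_(i < n) g i (e i) = 1].
Proof.
move=> [_ _ actD _] [n [f [g [_ _ gD gL gf]]]].
pose G (u : {ffun 'I_n -> X}) := g u.
have GD : {morph G : u v / u + v}.
  move=> u v; rewrite /G -gD; congr g.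
  by apply: functional_extensionality => j; rewrite ffunE.
pose single i z : {ffun 'I_n -> X} := [ffun j => if j == i then z else 0].
exists n, (f 1), (fun i z => G (single i z)); split.
- move=> i z z'; rewrite -GD; congr G; apply/ffunP => j.
  by rewrite !ffunE; case: eqP; rewrite ?addr0.
- move=> i r z; rewrite -[r * _]/(lreg r _) -gL; congr g.
  apply: functional_extensionality => j; rewrite !ffunE.
  by case: eqP => // _; rewrite (morph_add0 (actD r)).
have sum_unit : \sum_i single i (f 1 i) = [ffun j => f 1 j].
  apply/ffunP => j; rewrite sum_ffunE ffunE (bigD1 j) //= ffunE eqxx big1 ?addr0 //.
  by move=> i /negbTE; rewrite ffunE eq_sym => ->.
rewrite -(morph_sum GD) sum_unit /G -[RHS]gf; congr g.
by apply: functional_extensionality => j; rewrite ffunE.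
Qed.

Section MoritaModule.

Variables (A A' : pzRingType) (M : zmodType) (la : A -> M -> M) (ra : M -> A' -> M).
Hypothesis bimM : bimod_ax la ra.

Let la1 x : la 1 x = x.
Proof. by case: bimM => -[->]. Qed.
Let laM a b x : la (a * b) x = la a (la b x).
Proof. by case: bimM => -[_ ->]. Qed.
Let laDr a : {morph la a : x y / x + y}.
Proof. by case: bimM => -[_ _ + _] _ _ x y => ->. Qed.
Let laDl x : {morph la^~ x : a b / a + b}.
Proof. by case: bimM => -[_ _ _ +] _ _ a b => ->. Qed.
Let raM x a b : ra x (a * b) = ra (ra x a) b.
Proof. by case: bimM => _ [_ ->]. Qed.
Let raDl a : {morph ra^~ a : x y / x + y}.
Proof. by case: bimM => _ [_ _ + _] _ x y => ->. Qed.
Let raDr x : {morph ra x : a b / a + b}.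
Proof. by case: bimM => _ [_ _ _ +] _ a b => ->. Qed.
Let la_ra a x a' : la a (ra x a') = ra (la a x) a'.
Proof. by case: bimM => _ _ ->. Qed.

Hypothesis endM : forall h : M -> M, {morph h : x y / x + y} ->
  (forall a x, h (la a x) = la a (h x)) -> exists a', forall x, h x = ra x a'.
Hypothesis ra_inj : forall a1 a2 : A', (forall x, ra x a1 = ra x a2) -> a1 = a2.

Section Generator.

Variables (n : nat) (e : 'I_n -> M) (g : 'I_n -> M -> A).
Hypotheses (gD : forall i, {morph g i : x y / x + y})
           (gL : forall i a x, g i (la a x) = a * g i x)
           (g1 : \sum_i g i (e i) = 1).

Lemma la_inj a1 a2 : (forall x, la a1 x = la a2 x) -> a1 = a2.
Proof.
move=> eq12; rewrite -[a1]mulr1 -[a2]mulr1 -g1 !mulr_sumr.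
by apply: eq_bigr => i _; rewrite -!gL eq12.
Qed.

(* A = End(M_{A'}): the double centralizer property of the generator _A M. *)
Lemma rlinear_la (T : M -> M) : {morph T : x y / x + y} ->
    (forall x a', T (ra x a') = ra (T x) a') ->
  forall x, T x = la (\sum_i g i (T (e i))) x.
Proof.
move=> TD TR x; rewrite -{1}[x]la1 -g1 !(morph_sum (laDl x)) (morph_sum TD).
apply: eq_bigr => i _.
have [a' Ha'] : exists a', forall y, la (g i y) x = ra y a'.
  by apply: endM => [y z|a y]; rewrite ?gD ?laDl ?gL ?laM.
by rewrite !Ha' TR.
Qed.

Section Connection.

Variables (B : pzRingType) (iota : {rmorphism B -> A}).
Variables (D' : A' -> A') (delta : M -> M).
Hypotheses (deltaD : {morph delta : x y / x + y})
           (deltaR : forall x a', delta (ra x a') = ra (delta x) a' + ra x (D' a'))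
           (deltaB : forall b x, delta (la (iota b) x) = la (iota b) (delta x)).

Definition ad_delta (a : A) : A := \sum_i g i (la a (delta (e i)) - delta (la a (e i))).

Lemma la_ad_delta a x : la (ad_delta a) x = la a (delta x) - delta (la a x).
Proof.
symmetry; apply: (rlinear_la (T := fun x => la a (delta x) - delta (la a x))).
  by move=> y z; rewrite deltaD laDr laDr deltaD opprD addrACA.
move=> y a'; rewrite la_ra deltaR laDr !la_ra deltaR (morph_subr (raDl a')).
by rewrite opprD addrACA subrr addr0.
Qed.

Lemma ad_delta_derivation : is_derivation iota ad_delta.
Proof.
split=> [a1 a2|a1 a2|b]; apply: la_inj => x.
- by rewrite laDl !la_ad_delta laDl laDl deltaD opprD addrACA.
- rewrite laDl !laM !la_ad_delta (morph_subr (laDr _)) laM laM.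
  by rewrite [RHS]addrC addrA subrK.
- by rewrite la_ad_delta deltaB subrr (morph_add0 (laDl x)).
Qed.

Lemma connection_inner : weakly_separable iota -> is_inner D'.
Proof.
move=> wsA; have [s Ds] := wsA _ ad_delta_derivation.
pose eps x := delta x + la s x.
have epsD : {morph eps : x y / x + y}.
  by move=> x y; rewrite /eps deltaD laDr addrACA.
have epsL a x : eps (la a x) = la a (eps x).
  have := la_ad_delta a x; rewrite Ds laDl (morph_oppr (laDl x)) !laM => H.
  rewrite /eps laDr -[la s (la a x)](subrK (la a (la s x))) H.
  by rewrite addrCA addrA subrK.
have [t Ht] := endM epsD epsL.
exists (- t) => a'; apply: ra_inj => x.
rewrite mulNr mulrN opprK raDr (morph_oppr (raDr x)) !raM -!Ht /eps.
rewrite deltaR !raDl la_ra.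
by rewrite addrC [ra (delta x) a' + _]addrC -[_ + _ + ra (la s x) a']addrA addrK.
Qed.

End Connection.

End Generator.

Section GrassmannConnection.

Variables (n : nat) (u : 'I_n -> M) (c : 'I_n -> M -> A').
Hypotheses (cD : forall i, {morph c i : m m' / m + m'})
           (cR : forall i m a', c i (ra m a') = c i m * a')
           (sum_uc : forall m, \sum_i ra (u i) (c i m) = m).
Variable D' : A' -> A'.
Hypotheses (D'D : {morph D' : a b / a + b})
           (D'M : forall a b, D' (a * b) = D' a * b + a * D' b).

Definition grassmann (m : M) : M := \sum_i ra (u i) (D' (c i m)).

Lemma grassmannD : {morph grassmann : m m' / m + m'}.
Proof.
by move=> m m'; rewrite /grassmann -big_split; apply: eq_bigr => i _; rewrite cD D'D raDr.
Qed.

Lemma grassmannR m a' : grassmann (ra m a') = ra (grassmann m) a' + ra m (D' a').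
Proof.
rewrite /grassmann (morph_sum (raDl a')) -[X in ra X (D' a')](sum_uc m).
rewrite (morph_sum (raDl _)) -big_split.
by apply: eq_bigr => i _; rewrite cR D'M raDr !raM.
Qed.

Lemma grassmann_comm (L : M -> M) (tau : 'I_n -> 'I_n -> A') :
    {morph L : m m' / m + m'} -> (forall m a', L (ra m a') = ra (L m) a') ->
    (forall i, L (u i) = \sum_j ra (u j) (tau j i)) ->
    (forall j m, c j (L m) = \sum_i tau j i * c i m) ->
    (forall j i a', D' (tau j i * a') = tau j i * D' a') ->
  forall m, grassmann (L m) = L (grassmann m).
Proof.
move=> LD LR Lu cL D'tau m; rewrite /grassmann (morph_sum LD).
under eq_bigr => j _ do rewrite cL (morph_sum D'D) (morph_sum (raDr _)).
rewrite exchange_big /=; apply: eq_bigr => i _.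
by rewrite LR Lu (morph_sum (raDl _)); apply: eq_bigr => j _; rewrite D'tau raM.
Qed.

End GrassmannConnection.

Section Tensor.

Variables (B B' : pzRingType) (iota : {rmorphism B -> A}) (iota' : {rmorphism B' -> A'}).
Variables (N : zmodType) (lb : B -> N -> N) (rb : N -> B' -> N) (phi : A -> N -> M).
Hypothesis lmN : lmod_ax lb.

Let lb1 y : lb 1 y = y.
Proof. by case: lmN => ->. Qed.
Let lbM b b0 y : lb (b * b0) y = lb b (lb b0 y).
Proof. by case: lmN => _ ->. Qed.
Let lbDl y : {morph lb^~ y : b b0 / b + b0}.
Proof. by case: lmN => _ _ _ + b b0 => ->. Qed.

Hypothesis endN : forall h : N -> N, {morph h : y z / y + z} ->
  (forall b y, h (lb b y) = lb b (h y)) -> exists b', forall y, h y = rb y b'.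
Hypotheses (phi_bal : balanced iota lb phi)
           (phiL : forall a1 a y, phi (a1 * a) y = la a1 (phi a y))
           (phiR : forall b' a y, phi a (rb y b') = ra (phi a y) (iota' b'))
           (phi_univ : forall (P : zmodType) (psi : A -> N -> P),
              balanced iota lb psi ->
              exists h : M -> P,
                [/\ forall m m', h (m + m') = h m + h m',
                    forall a y, h (phi a y) = psi a y
                  & forall h' : M -> P, (forall m m', h' (m + m') = h' m + h' m') ->
                      (forall a y, h' (phi a y) = psi a y) -> forall m, h' m = h m]).

Let phiDl y : {morph phi^~ y : a1 a2 / a1 + a2}.
Proof. by case: phi_bal => + _ _ a1 a2 => ->. Qed.
Let phiDr a : {morph phi a : y z / y + z}.
Proof. by case: phi_bal => _ + _ y z => ->. Qed.
Let phiB b a y : phi (a * iota b) y = phi a (lb b y).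
Proof. by case: phi_bal => _ _ ->. Qed.

Lemma tensor_ext (P : zmodType) (h1 h2 : M -> P) :
    {morph h1 : m m' / m + m'} -> {morph h2 : m m' / m + m'} ->
    (forall a y, h1 (phi a y) = h2 (phi a y)) ->
  h1 =1 h2.
Proof.
move=> h1D h2D h12 m.
have bal : balanced iota lb (fun a y => h1 (phi a y)).
  by split=> [a1 a2 y|a y z|b a y]; rewrite ?phiDl ?phiDr ?h1D ?phiB.
have [h [_ _ huniq]] := phi_univ bal.
by rewrite (huniq h1 h1D) // (huniq h2 h2D).
Qed.

Lemma phi1_lb b y : phi 1 (lb b y) = la (iota b) (phi 1 y).
Proof. by rewrite -phiB mul1r -{1}[iota b]mulr1 phiL. Qed.

Lemma phi1_faithful a1 a2 : (forall y, ra (phi 1 y) a1 = ra (phi 1 y) a2) -> a1 = a2.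
Proof.
move=> eq12; apply: ra_inj; apply: tensor_ext => [x y|x y|a y]; rewrite ?raDl //.
by rewrite -[a]mulr1 phiL -!la_ra eq12.
Qed.

Variables (n : nat) (e : 'I_n -> N) (g : 'I_n -> N -> B).
Hypotheses (gD : forall i, {morph g i : y z / y + z})
           (gL : forall i b y, g i (lb b y) = b * g i y)
           (g1 : \sum_i g i (e i) = 1).

(* c i m is the element of A' = End(_A M) acting as  a (x) y |-> a g_i(y) m. *)
Lemma exists_coordinates : exists c : 'I_n -> M -> A',
  forall i m y, ra (phi 1 y) (c i m) = la (iota (g i y)) m.
Proof.
suff cex i m : exists a', forall y, ra (phi 1 y) a' = la (iota (g i y)) m.
  have [c cP] := functional_choice _ (fun i => functional_choice _ (cex i)).
  by exists c.
pose psi a y := la (a * iota (g i y)) m.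
have bal : balanced iota lb psi.
  split=> [a1 a2 y|a y z|b a y]; rewrite /psi.
  - by rewrite mulrDl laDl.
  - by rewrite gD rmorphD mulrDr laDl.
  - by rewrite gL rmorphM mulrA.
have [h [hD hphi _]] := phi_univ bal.
have hL a x : h (la a x) = la a (h x).
  apply: (tensor_ext (h1 := fun x => h (la a x)) (h2 := fun x => la a (h x))).
  - by move=> y z; rewrite laDr hD.
  - by move=> y z; rewrite hD laDr.
  - by move=> a0 y; rewrite -phiL !hphi /psi !laM.
have [a' Ha'] := endM hD hL.
by exists a' => y; rewrite -Ha' hphi /psi mul1r.
Qed.

Lemma exists_rb_coordinates : exists beta : 'I_n -> N -> B',
  forall i y z, rb z (beta i y) = lb (g i z) y.
Proof.
suff bex i y : exists b', forall z, rb z b' = lb (g i z) y.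
  have [beta betaP] := functional_choice _ (fun i => functional_choice _ (bex i)).
  by exists beta.
have [b' Hb'] : exists b', forall z, lb (g i z) y = rb z b'.
  by apply: endN => [z z'|b z]; rewrite ?gD ?lbDl ?gL ?lbM.
by exists b' => z; rewrite -Hb'.
Qed.

Section Coordinates.

Variables (c : 'I_n -> M -> A') (beta : 'I_n -> N -> B').
Hypotheses (cP : forall i m y, ra (phi 1 y) (c i m) = la (iota (g i y)) m)
           (betaP : forall i y z, rb z (beta i y) = lb (g i z) y).

Lemma coordD i : {morph c i : m m' / m + m'}.
Proof. by move=> m m'; apply: phi1_faithful => y; rewrite raDr !cP laDr. Qed.

Lemma coordR i m a' : c i (ra m a') = c i m * a'.
Proof. by apply: phi1_faithful => y; rewrite raM !cP la_ra. Qed.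

Lemma sum_phi1_coord m : \sum_i ra (phi 1 (e i)) (c i m) = m.
Proof.
under eq_bigr => i _ do rewrite cP.
by rewrite -(morph_sum (laDl m)) -rmorph_sum g1 rmorph1 la1.
Qed.

Lemma sum_rb_coord y : \sum_i rb (e i) (beta i y) = y.
Proof.
under eq_bigr => i _ do rewrite betaP.
by rewrite -(morph_sum (lbDl y)) g1 lb1.
Qed.

Lemma la_iota_phi1 b i :
  la (iota b) (phi 1 (e i)) = \sum_j ra (phi 1 (e j)) (iota' (beta j (lb b (e i)))).
Proof.
rewrite -phi1_lb -{1}[lb b (e i)]sum_rb_coord (morph_sum (phiDr 1)).
by apply: eq_bigr => j _; rewrite phiR.
Qed.

Lemma coord_la_iota b j m :
  c j (la (iota b) m) = \sum_i iota' (beta j (lb b (e i))) * c i m.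
Proof.
apply: phi1_faithful => y; rewrite cP (morph_sum (raDr _)).
under eq_bigr => i _ do rewrite raM -phiR betaP -lbM phi1_lb -la_ra.
by rewrite -(morph_sum (laDr _)) sum_phi1_coord -laM -rmorphM.
Qed.

End Coordinates.

Lemma exists_B_linear_connection (D' : A' -> A') : is_derivation iota' D' ->
  exists delta : M -> M,
    [/\ {morph delta : x y / x + y},
        forall x a', delta (ra x a') = ra (delta x) a' + ra x (D' a')
      & forall b x, delta (la (iota b) x) = la (iota b) (delta x)].
Proof.
move=> [D'D D'M D'B].
have [c cP] := exists_coordinates; have [beta betaP] := exists_rb_coordinates.
exists (grassmann (fun i => phi 1 (e i)) c D'); split.
- exact: (grassmannD _ (coordD cP) D'D).
- exact: (grassmannR (coordR cP) (sum_phi1_coord cP) D'M).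
move=> b; apply: (grassmann_comm D'D (tau := fun j i => iota' (beta j (lb b (e i))))).
- by move=> x y; rewrite laDr.
- by move=> x a'; rewrite la_ra.
- exact: la_iota_phi1 betaP b.
- exact: coord_la_iota cP betaP b.
- by move=> j i a'; rewrite D'M D'B mul0r add0r.
Qed.

End Tensor.

End MoritaModule.

Theorem theorem3p5 (B A B' A' : pzRingType)
    (iota : {rmorphism B -> A}) (iota' : {rmorphism B' -> A'}) :
  injective iota -> injective iota' ->
  weakly_separable iota -> morita_equivalent iota iota' ->
  weakly_separable iota'.
Proof.
move=> _ _ wsA [M [la [ra [N [lb [rb [moritaM moritaN tensorMN]]]]]]] D' D'der.
have [bimM [_ genM] ra_inj endM] := moritaM; have [lmM _ _] := bimM.
have [[lmN _ _] [_ genN] _ endN] := moritaN.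
have [phi [phi_bal phiL phiR phi_univ]] := tensorMN.
have [nM [eM [gM [gMD gML gM1]]]] := ldivides_lreg_trace1 lmM genM.
have [nN [eN [gN [gND gNL gN1]]]] := ldivides_lreg_trace1 lmN genN.
have [delta [deltaD deltaR deltaB]] := exists_B_linear_connection bimM endM ra_inj
  lmN endN phi_bal phiL phiR phi_univ gND gNL gN1 D'der.
exact: (connection_inner bimM endM ra_inj gMD gML gM1 deltaD deltaR deltaB wsA).
Qed.
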